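(* Let $A\in M_n$, $B\in M_m$, $c\in\mathbb{R}^n$, $d\in\mathbb{R}^m$. If $W_c(A)=W_d(B)$, then there exists a $c$-value of $A$ which is also a $d$-value of $B$.
   Context: $M_n$ denotes the space of $n\times n$ complex matrices. The $c$-numerical range of $A\in M_n$ is $W_c(A)=\{\sum_{j=1}^n c_jx_j^*Ax_j:\ x_1,\dots,x_n\in\mathbb{C}^n\text{ orthonormal}\}$, and similarly $W_d(B)$. Let $\lambda_1(A),\dots,\lambda_n(A)$ be the eigenvalues of $A$ counted with algebraic multiplicity and let $i_1<\dots<i_r$ be the indices with $c_{i_s}\neq0$. A $c$-value of $A$ is a number $\sum_{s=1}^r c_{i_s}\lambda_{j_s}(A)$ with $j_1,\dots,j_r\in\{1,\dots,n\}$ pairwise distinct; $d$-values of $B$ are defined analogously. *)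

From HB Require Import structures.
From mathcomp Require Import all_boot all_order all_algebra.
Set Implicit Arguments. Unset Strict Implicit. Unset Printing Implicit Defensive.
Import Order.TTheory GRing.Theory Num.Theory.
Local Open Scope ring_scope.

Definition adjmx (C : numClosedFieldType) (p q : nat) (M : 'M[C]_(p, q)) : 'M[C]_(q, p) :=
  (map_mx Num.conj M)^T.

Definition orthonormal_family (C : numClosedFieldType) (n : nat) (x : 'I_n -> 'cV[C]_n) :=
  forall i j : 'I_n, (adjmx (x i) *m x j) 0 0 = (i == j)%:R.

Definition c_numrange (C : numClosedFieldType) (n : nat) (c : 'I_n -> C) (A : 'M[C]_n) (z : C) :=
  exists x : 'I_n -> 'cV[C]_n, orthonormal_family x /\
    z = \sum_(j < n) c j * (adjmx (x j) *m A *m x j) 0 0.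

(* lam lists the eigenvalues of A counted with algebraic multiplicity *)
Definition eigen_listing (C : numClosedFieldType) (n : nat) (A : 'M[C]_n) (lam : 'I_n -> C) :=
  char_poly A = \prod_(i < n) ('X - (lam i)%:P).

Definition c_value (C : numClosedFieldType) (n : nat) (c : 'I_n -> C) (A : 'M[C]_n) (z : C) :=
  exists lam : 'I_n -> C, eigen_listing A lam /\
    exists j : 'I_n -> 'I_n,
      {in [pred i | c i != 0] &, injective j} /\
      z = \sum_(i < n | c i != 0) c i * lam (j i).

From mathcomp Require Import all_boot all_order all_algebra.
From mathcomp Require Import fingroup perm spectral mpoly ring.
Import Order.TTheory GRing.Theory Num.Theory.
Set Implicit Arguments. Unset Strict Implicit. Unset Printing Implicit Defensive.
Local Open Scope ring_scope.

(* Let [|t| = 1] and write [t = w^2] with [|w| = 1].  For real weights, the c-sums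
   of the Hermitian matrix [w^* A + w A^*] are the numbers [2 Re (w^* z)] with [z]
   in [W_c(A)], so [W_c(A) = W_d(B)] forces the maxima of the c-sums of
   [w^* A + w A^*] and of the d-sums of [w^* B + w B^*] to agree.  By the
   rearrangement inequality for doubly stochastic matrices (Ky Fan), these maxima
   are a c-value and a d-value of the two Hermitian matrices; multiplying by [w],
   [A + t A^*] and [B + t B^*] have a common c-/d-value.  The c-values of
   [A + t A^*] are the roots of a polynomial whose coefficients are polynomial in
   [t] (via symmetric functions of the eigenvalues), so the resultant of the two
   polynomials vanishes on the unit circle, hence everywhere, in particular at
   [t = 0]. *)

Section Rearrangement.
Variable R : numDomainType.

Lemma sum_weighted_le_prefix n k (b q : nat -> R) : (k < n)%N ->
  (forall i j, (i <= j < n)%N -> b j <= b i) ->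
  (forall j, (j < n)%N -> 0 <= q j <= 1) ->
  \sum_(0 <= j < n) q j = k.+1%:R ->
  \sum_(0 <= j < n) q j * b j <= \sum_(0 <= j < k.+1) b j.
Proof.
move=> kn hb hq sq; pose e j : R := (j < k.+1)%N%:R.
have prefixE (F : nat -> R) : \sum_(0 <= j < k.+1) F j = \sum_(0 <= j < n) e j * F j.
  rewrite (big_nat_widen _ _ _ _ _ kn) big_mkcond /=.
  by apply: eq_bigr => j _; rewrite /e; case: ltnP; rewrite ?mul1r ?mul0r.
have se : \sum_(0 <= j < n) e j = k.+1%:R.
  transitivity (\sum_(0 <= j < k.+1) (1 : R)); last by rewrite sumr_const_nat subn0.
  by rewrite prefixE; apply: eq_bigr => j _; rewrite mulr1.
rewrite -subr_le0.
(* [b k] is the threshold: [q j - e j] and [b j - b k] have opposite signs. *)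
have -> : \sum_(0 <= j < n) q j * b j - \sum_(0 <= j < k.+1) b j =
    \sum_(0 <= j < n) (q j - e j) * (b j - b k).
  rewrite prefixE -sumrB.
  transitivity (\sum_(0 <= j < n) (q j - e j) * (b j - b k) +
      b k * (\sum_(0 <= j < n) q j - \sum_(0 <= j < n) e j)).
    by rewrite -sumrB mulr_sumr -big_split /=; apply: eq_bigr => j _; ring.
  by rewrite sq se subrr mulr0 addr0.
rewrite big_nat_cond; apply: sumr_le0 => j /andP [/andP [_ jn] _].
have /andP [q0 q1] := hq j jn; rewrite /e; case: (ltnP j k.+1) => jk.
  by rewrite mulr_le0_ge0 ?subr_le0 ?subr_ge0 //; apply: hb; rewrite -ltnS jk kn.
by rewrite mulr_ge0_le0 ?subr0 ?subr_le0 //; apply: hb; rewrite (ltnW jk) jn.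
Qed.

Lemma abel_sum_le0 n (a d : nat -> R) :
  (forall i j, (i <= j < n)%N -> a j <= a i) ->
  (forall k, (k <= n)%N -> \sum_(0 <= i < k) d i <= 0) ->
  \sum_(0 <= i < n) d i = 0 ->
  \sum_(0 <= i < n) a i * d i <= 0.
Proof.
move=> ha hD Dn; pose D k := \sum_(0 <= i < k) d i.
have partial k : (k < n)%N -> \sum_(0 <= i < k) a i * d i <= a k * D k.
  elim: k => [|k IH] kn; first by rewrite /D !big_geq // mulr0.
  rewrite big_nat_recr //=; apply: le_trans (_ : a k * D k.+1 <= _).
    by rewrite /D big_nat_recr //= mulrDr lerD2r IH // ltnW.
  rewrite -subr_ge0 -mulrBl mulr_le0 ?subr_le0 ?hD 1?ltnW //.
  by apply: ha; rewrite leqnSn.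
case: n => [|n] in ha hD Dn partial *; first by rewrite big_geq.
rewrite big_nat_recr //=; apply: le_trans (lerD (partial n _) (lexx _)) _ => //.
by rewrite -mulrDr /D -big_nat_recr //= Dn mulr0.
Qed.

Lemma doubly_stochastic_sum_le n (a b : nat -> R) (W : nat -> nat -> R) :
  (forall i j, (i <= j < n)%N -> a j <= a i) ->
  (forall i j, (i <= j < n)%N -> b j <= b i) ->
  (forall i j, (i < n)%N -> (j < n)%N -> 0 <= W i j) ->
  (forall i, (i < n)%N -> \sum_(0 <= j < n) W i j = 1) ->
  (forall j, (j < n)%N -> \sum_(0 <= i < n) W i j = 1) ->
  \sum_(0 <= i < n) a i * \sum_(0 <= j < n) W i j * b j <= \sum_(0 <= i < n) a i * b i.
Proof.
move=> ha hb W0 rowW colW; rewrite -subr_le0 -sumrB.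
under eq_bigr do rewrite -mulrBr.
pose u i := \sum_(0 <= j < n) W i j * b j.
have prefix_sumE k : \sum_(0 <= i < k) u i = \sum_(0 <= j < n) (\sum_(0 <= i < k) W i j) * b j.
  by rewrite exchange_big /=; apply: eq_bigr => j _; rewrite mulr_suml.
apply: abel_sum_le0 => // [[|k] kn|]; first by rewrite big_geq.
  rewrite sumrB prefix_sumE subr_le0; apply: sum_weighted_le_prefix => // [j jn|].
    apply/andP; split.
      rewrite big_nat_cond sumr_ge0 // => i /andP [/andP [_ ik] _].
      by apply: W0 => //; apply: leq_trans ik kn.
    rewrite -(colW j jn) [leRHS](big_cat_nat (n := k.+1)) ?lerDl //=.
    by rewrite big_nat_cond sumr_ge0 // => i /andP [/andP [_ ik] _]; apply: W0.
  rewrite exchange_big /=; transitivity (\sum_(0 <= i < k.+1) (1 : R)).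
    by apply: eq_big_nat => i /andP [_ ik]; apply: rowW; apply: leq_trans ik kn.
  by rewrite sumr_const_nat subn0.
rewrite sumrB prefix_sumE -sumrB big_nat_cond big1 // => j /andP [/andP [_ jn] _].
by rewrite colW // mul1r subrr.
Qed.

Lemma sort_perm_nonincr n (f : 'I_n -> R) : (forall i, f i \is Num.real) ->
  exists s : 'S_n, forall i j : 'I_n, (i <= j)%N -> f (s j) <= f (s i).
Proof.
case: n f => [|n] f freal; first by exists 1%g => -[].
pose r i j := f j <= f i.
have r_total : total r by move=> i j; rewrite /r real_leVge.
have r_trans : transitive r by move=> i j k hji hik; rewrite /r (le_trans hik hji).
have r_refl : reflexive r by move=> i; rewrite /r lexx.
set t := sort r (enum 'I_n.+1).
have t_perm : perm_eq t (enum 'I_n.+1) by rewrite perm_sort.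
have t_size : size t = n.+1 by rewrite (perm_size t_perm) size_enum_ord.
have t_uniq : uniq t by rewrite (perm_uniq t_perm) enum_uniq.
pose g (k : 'I_n.+1) := nth ord0 t k.
have g_inj : injective g.
  by move=> i j /eqP; rewrite /g nth_uniq ?t_size // => /eqP; apply: val_inj.
exists (perm g_inj) => i j ij; rewrite !permE /g.
by apply: (sorted_leq_nth r_trans r_refl ord0 (sort_sorted r_total _)); rewrite ?inE ?t_size.
Qed.

Lemma doubly_stochastic_perm_le n (c rho : 'I_n -> R) :
  (forall i, c i \is Num.real) -> (forall i, rho i \is Num.real) ->
  exists s : 'S_n, forall W : 'I_n -> 'I_n -> R, (forall i j, 0 <= W i j) ->
    (forall i, \sum_j W i j = 1) -> (forall j, \sum_i W i j = 1) ->
    \sum_i c i * \sum_j W i j * rho j <= \sum_i c i * rho (s i).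
Proof.
move=> creal rhoreal; have [al hal] := sort_perm_nonincr creal.
have [be hbe] := sort_perm_nonincr rhoreal.
exists (al^-1 * be)%g => W W0 rowW colW.
case: n => [|n] in c rho creal rhoreal al hal be hbe W W0 rowW colW *.
  by rewrite !big_ord0.
have natE (F : 'I_n.+1 -> R) : \sum_k F k = \sum_(0 <= k < n.+1) F (inord k).
  by rewrite big_mkord; apply: eq_bigr => k _; rewrite inord_val.
rewrite (reindex_inj (@perm_inj _ al)) [leRHS](reindex_inj (@perm_inj _ al)) /=.
under eq_bigr do rewrite (reindex_inj (@perm_inj _ be)) /=.
under [leRHS]eq_bigr do rewrite permM permK.
rewrite natE [leRHS]natE; under eq_bigr do rewrite natE.
apply: (doubly_stochastic_sum_le (a := fun k => c (al (inord k)))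
  (b := fun k => rho (be (inord k))) (W := fun k l => W (al (inord k)) (be (inord l)))).
- by move=> i j /andP [ij jn]; apply: hal; rewrite !inordK ?(leq_ltn_trans ij jn).
- by move=> i j /andP [ij jn]; apply: hbe; rewrite !inordK ?(leq_ltn_trans ij jn).
- by move=> i j _ _; apply: W0.
- by move=> i _; rewrite -(rowW (al (inord i))) (reindex_inj (@perm_inj _ be)) /= natE.
- by move=> j _; rewrite -(colW (be (inord j))) (reindex_inj (@perm_inj _ al)) /= natE.
Qed.

End Rearrangement.

Section CharPoly.
Variable F : fieldType.

Lemma char_poly_conj n (P M : 'M[F]_n) : P \in unitmx ->
  char_poly (invmx P *m M *m P) = char_poly M.
Proof.
move=> Pu; rewrite /char_poly /char_poly_mx.
have PVP : map_mx polyC (invmx P) *m map_mx polyC P = 1%:M.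
  by rewrite -map_mxM mulVmx // map_mx1.
have -> : 'X%:M - map_mx polyC (invmx P *m M *m P) =
    map_mx polyC (invmx P) *m ('X%:M - map_mx polyC M) *m map_mx polyC P.
  by rewrite mulmxBr mulmxBl !map_mxM mul_mx_scalar -scalemxAl PVP scalemx1.
by rewrite !det_mulmx mulrAC -det_mulmx PVP det1 mul1r.
Qed.

Lemma char_polyZ n (a : F) (M : 'M[F]_n) : a != 0 ->
  char_poly (a *: M) = a%:P ^+ n * (char_poly M \Po (a^-1 *: 'X)).
Proof.
move=> a0; rewrite /char_poly -det_map_mx -detZ; congr (\det _).
apply/matrixP => i j; rewrite !mxE /= rmorphB rmorphMn /= comp_polyX comp_polyC.
by rewrite mulrBr mulrnAr mul_polyC scalerA mulfV // scale1r polyCM.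
Qed.

End CharPoly.

Section EigenListing.
Variable C : numClosedFieldType.

Lemma eigen_listingZ n (a : C) (M : 'M[C]_n) lam : a != 0 -> eigen_listing M lam ->
  eigen_listing (a *: M) (fun i => a * lam i).
Proof.
move=> a0; rewrite /eigen_listing char_polyZ // => ->.
rewrite rmorph_prod /= -[in a%:P ^+ n](card_ord n) -prodr_const -big_split /=.
apply: eq_bigr => i _; rewrite rmorphB /= comp_polyX comp_polyC mulrBr mul_polyC.
by rewrite scalerA mulfV // scale1r polyCM.
Qed.

Lemma eigen_listing_diag n (P : 'M[C]_n) (D : 'rV[C]_n) : P \in unitmx ->
  eigen_listing (invmx P *m diag_mx D *m P) (D 0).
Proof.
move=> Pu; rewrite /eigen_listing char_poly_conj // char_poly_trig ?diag_mx_is_trig //.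
by apply: eq_bigr => i _; rewrite mxE eqxx.
Qed.

Lemma exists_eigen_listing n (A : 'M[C]_n) : exists lam, eigen_listing A lam.
Proof.
have [r] := closed_field_poly_normal (char_poly A).
rewrite (monicP (char_poly_monic A)) scale1r => Ar.
have r_size : size r = n.
  by have := size_char_poly A; rewrite Ar size_prod_XsubC => -[].
by exists (nth 0 r); rewrite /eigen_listing Ar (big_nth 0) r_size big_mkord.
Qed.

End EigenListing.

Section HermitianForms.
Variable C : numClosedFieldType.

Lemma adjmxD p q (M N : 'M[C]_(p, q)) : adjmx (M + N) = adjmx M + adjmx N.
Proof. by apply/matrixP => i j; rewrite !mxE rmorphD. Qed.

Lemma adjmxZ p q a (M : 'M[C]_(p, q)) : adjmx (a *: M) = a^* *: adjmx M.
Proof. by apply/matrixP => i j; rewrite !mxE rmorphM. Qed.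

Lemma adjmxK p q (M : 'M[C]_(p, q)) : adjmx (adjmx M) = M.
Proof. by apply/matrixP => i j; rewrite !mxE conjCK. Qed.

Lemma adjmxM p q r (M : 'M[C]_(p, q)) (N : 'M[C]_(q, r)) :
  adjmx (M *m N) = adjmx N *m adjmx M.
Proof. by rewrite /adjmx map_mxM trmx_mul. Qed.

Definition qform n (K : 'M[C]_n) (x : 'cV[C]_n) : C := (adjmx x *m K *m x) 0 0.

Definition csum n (c : 'I_n -> C) (K : 'M[C]_n) (x : 'I_n -> 'cV[C]_n) : C :=
  \sum_i c i * qform K (x i).

Lemma qformD n (K L : 'M[C]_n) x : qform (K + L) x = qform K x + qform L x.
Proof. by rewrite /qform mulmxDr mulmxDl mxE. Qed.

Lemma qformZ n a (K : 'M[C]_n) x : qform (a *: K) x = a * qform K x.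
Proof. by rewrite /qform -scalemxAr -scalemxAl mxE. Qed.

Lemma qform_adj n (K : 'M[C]_n) x : qform (adjmx K) x = (qform K x)^*.
Proof.
rewrite /qform; have -> : ((adjmx x *m K *m x) 0 0)^* = adjmx (adjmx x *m K *m x) 0 0.
  by rewrite !mxE.
by rewrite !adjmxM adjmxK mulmxA.
Qed.

Lemma qform_unitary_diag n (P : 'M[C]_n) (D : 'rV[C]_n) x :
  qform (adjmx P *m diag_mx D *m P) x = \sum_j `|(P *m x) j 0| ^+ 2 * D 0 j.
Proof.
rewrite /qform !mulmxA -adjmxM -mulmxA mul_mx_diag mxE; apply: eq_bigr => j _.
by rewrite normCK !mxE; ring.
Qed.

Lemma hermitian_unitary_diag n (K : 'M[C]_n) : adjmx K = K ->
  exists (P : 'M[C]_n) (D : 'rV[C]_n), [/\ P *m adjmx P = 1%:M, adjmx P *m P = 1%:M,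
    K = adjmx P *m diag_mx D *m P & forall i, D 0 i \is Num.real].
Proof.
move=> Kherm.
have adjmxE p q (M : 'M[C]_(p, q)) : adjmx M = (M ^t* )%sesqui by rewrite /adjmx map_trmx.
set P := spectralmx K; set D := spectral_diag K.
have PP : P *m adjmx P = 1%:M.
  by rewrite adjmxE; apply/unitarymxP; apply: spectral_unitarymx.
have K_normal : K \is normalmx by apply/normalmxP; rewrite -adjmxE Kherm.
have KE : K = adjmx P *m diag_mx D *m P.
  by rewrite adjmxE -invmx_unitary ?spectral_unitarymx //; apply/orthomx_spectralP.
exists P, D; split => //; first exact: mulmx1C.
have DE : diag_mx D = P *m K *m adjmx P.
  by rewrite KE !mulmxA PP mul1mx -mulmxA PP mulmx1.
move=> i; have : adjmx (diag_mx D) = diag_mx D by rewrite DE !adjmxM adjmxK Kherm mulmxA.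
by move/matrixP/(_ i i); rewrite !mxE eqxx !mulr1n => /CrealP.
Qed.

Lemma unitary_orthonormal_stochastic n (P : 'M[C]_n) (y : 'I_n -> 'cV[C]_n) :
  P *m adjmx P = 1%:M -> adjmx P *m P = 1%:M -> orthonormal_family y ->
  (forall i, \sum_j `|(P *m y i) j 0| ^+ 2 = 1) /\
  (forall j, \sum_i `|(P *m y i) j 0| ^+ 2 = 1).
Proof.
move=> PP PP' yorth; pose V : 'M[C]_n := P *m \matrix_(i, j) y j i 0.
have VE i j : (P *m y i) j 0 = V j i.
  by rewrite !mxE; apply: eq_bigr => k _; rewrite !mxE.
have VV : adjmx V *m V = 1%:M.
  rewrite adjmxM -mulmxA (mulmxA (adjmx P)) PP' mul1mx.
  by apply/matrixP => i j; rewrite [RHS]mxE -(yorth i j) !mxE; apply: eq_bigr => k _; rewrite !mxE.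
have VV' : V *m adjmx V = 1%:M := mulmx1C VV.
split=> [i|j]; under eq_bigr do rewrite VE normCK.
- have := congr1 (fun M : 'M[C]_n => M i i) VV; rewrite /= !mxE eqxx mulr1n => <-.
  by apply: eq_bigr => j _; rewrite !mxE mulrC.
- have := congr1 (fun M : 'M[C]_n => M j j) VV'; rewrite /= !mxE eqxx mulr1n => <-.
  by apply: eq_bigr => i _; rewrite !mxE.
Qed.

Lemma hermitian_csum_max n (K : 'M[C]_n) (c : 'I_n -> C) :
  adjmx K = K -> (forall i, c i \is Num.real) ->
  exists (lam : 'I_n -> C) (s : 'S_n), [/\ eigen_listing K lam,
    exists2 x, orthonormal_family x & csum c K x = \sum_i c i * lam (s i)
  & forall y, orthonormal_family y -> csum c K y <= \sum_i c i * lam (s i)].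
Proof.
move=> Kherm creal; have [P [D [PP PP' KE Dreal]]] := hermitian_unitary_diag Kherm.
have [s s_max] := doubly_stochastic_perm_le creal Dreal.
have Pu : P \in unitmx by case: (mulmx1_unit PP).
have PV : invmx P = adjmx P by rewrite -[invmx P]mulmx1 -PP mulmxA mulVmx // mul1mx.
have PPE j k : (P *m adjmx P) j k = (j == k)%:R by rewrite PP mxE.
exists (D 0), s; split.
- by rewrite KE -PV; apply: eigen_listing_diag.
- (* the rows of [P] are orthonormal eigenvectors of [K] *)
  exists (fun i => adjmx (row (s i) P)).
    move=> i j; rewrite adjmxK -(inj_eq (@perm_inj _ s)) -PPE !mxE.
    by apply: eq_bigr => k _; rewrite !mxE.
  apply: eq_bigr => i _; congr (_ * _); rewrite KE qform_unitary_diag.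
  have ProwE j : (P *m adjmx (row (s i) P)) j 0 = (j == s i)%:R.
    by rewrite -PPE !mxE; apply: eq_bigr => k _; rewrite !mxE.
  rewrite (bigD1 (s i)) //= big1 => [|j /negbTE ji]; last by rewrite ProwE ji normr0 expr0n mul0r.
  by rewrite ProwE eqxx normr1 expr1n mul1r addr0.
move=> y yorth; have [rowW colW] := unitary_orthonormal_stochastic PP PP' yorth.
rewrite /csum KE; under eq_bigr do rewrite qform_unitary_diag.
by apply: s_max => // i j; rewrite exprn_ge0.
Qed.

Definition herm_rot n (w : C) (A : 'M[C]_n) : 'M[C]_n := w^* *: A + w *: adjmx A.

Lemma herm_rot_adj n w (A : 'M[C]_n) : adjmx (herm_rot w A) = herm_rot w A.
Proof. by rewrite adjmxD !adjmxZ adjmxK conjCK addrC. Qed.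

Lemma csum_herm_rot n (c : 'I_n -> C) w (A : 'M[C]_n) x :
  (forall i, c i \is Num.real) ->
  csum c (herm_rot w A) x = w^* * csum c A x + w * (csum c A x)^*.
Proof.
move=> creal; rewrite /csum rmorph_sum !mulr_sumr -big_split; apply: eq_bigr => i _ /=.
by rewrite qformD !qformZ qform_adj rmorphM /= (conj_Creal (creal i)); ring.
Qed.

Lemma csum_herm_rot_sub n m (A : 'M[C]_n) (B : 'M[C]_m) (c : 'I_n -> C) (d : 'I_m -> C) :
    (forall i, c i \is Num.real) -> (forall i, d i \is Num.real) ->
    (forall z, c_numrange c A z -> c_numrange d B z) ->
  forall w x, orthonormal_family x ->
  exists2 y, orthonormal_family y & csum c (herm_rot w A) x = csum d (herm_rot w B) y.
Proof.
move=> creal dreal subW w x xorth.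
have [y [yorth yE]] := subW (csum c A x) (ex_intro _ x (conj xorth erefl)).
by exists y => //; rewrite !csum_herm_rot // yE.
Qed.

Lemma unit_circle_sqrt (t : C) : t * t^* = 1 -> exists w : C, w * w^* = 1 /\ w * w = t.
Proof.
move=> tt; exists (sqrtC t); split; last by rewrite -expr2 sqrtCK.
have : (sqrtC t * (sqrtC t)^*) ^+ 2 = 1 by rewrite exprMn -rmorphXn sqrtCK.
move/eqP; rewrite sqrf_eq1 => /orP [/eqP //|/eqP ww].
by have := mul_conjC_ge0 (sqrtC t); rewrite ww ler0N1.
Qed.

End HermitianForms.

Lemma unit_pencil_common_value (C : numClosedFieldType) n m (A : 'M[C]_n) (B : 'M[C]_m)
    (c : 'I_n -> C) (d : 'I_m -> C) :
    (forall i, c i \is Num.real) -> (forall i, d i \is Num.real) ->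
    (forall z, c_numrange c A z <-> c_numrange d B z) ->
  forall t : C, t * t^* = 1 ->
  exists (lamA : 'I_n -> C) (lamB : 'I_m -> C) (sA : 'S_n) (sB : 'S_m),
  [/\ eigen_listing (A + t *: adjmx A) lamA, eigen_listing (B + t *: adjmx B) lamB
    & \sum_i c i * lamA (sA i) = \sum_i d i * lamB (sB i)].
Proof.
move=> creal dreal eqW t /unit_circle_sqrt [w [ww wwt]].
have pencilE k (M : 'M[C]_k) : M + t *: adjmx M = w *: herm_rot w M.
  by rewrite scalerDr !scalerA ww -wwt scale1r.
have w0 : w != 0 by apply: contraPneq ww => ->; rewrite mul0r => /esym/eqP; rewrite oner_eq0.
have [lA [sA [lAE [xA xAorth xAE] maxA]]] := hermitian_csum_max (herm_rot_adj w A) creal.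
have [lB [sB [lBE [yB yBorth yBE] maxB]]] := hermitian_csum_max (herm_rot_adj w B) dreal.
exists (fun i => w * lA i), (fun i => w * lB i), sA, sB.
rewrite !pencilE; split; try exact: eigen_listingZ.
under eq_bigr do rewrite mulrCA; under [RHS]eq_bigr do rewrite mulrCA.
rewrite -!mulr_sumr; congr (_ * _); apply/le_anti/andP; split.
  rewrite -xAE; have [y yorth ->] := csum_herm_rot_sub creal dreal (fun z => (eqW z).1) w xAorth.
  exact: maxB.
rewrite -yBE; have [x xorth ->] := csum_herm_rot_sub dreal creal (fun z => (eqW z).2) w yBorth.
exact: maxA.
Qed.

(* Up to sign, the coefficients of [char_poly M] are the elementary symmetric
   functions of the eigenvalues of [M]. *)
Definition char_poly_esym (R : nzRingType) n (M : 'M[R]_n) (k : 'I_n) : R :=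
  (-1) ^+ k.+1 * (char_poly M)`_(n - k.+1).

Lemma char_poly_esym_map (R S : comNzRingType) (f : {rmorphism R -> S}) n (M : 'M[R]_n) k :
  f (char_poly_esym M k) = char_poly_esym (map_mx f M) k.
Proof. by rewrite /char_poly_esym rmorphM rmorphXn rmorphN1 -coef_map map_char_poly. Qed.

Section MPoly.
Variable R : comNzRingType.

Lemma meval_rmorph (S : comNzRingType) (f : {rmorphism R -> S}) k (p : {mpoly R[k]}) v :
  f p.@[v] = (map_mpoly f p).@[f \o v].
Proof.
elim/mpolyind: p => [|a mo p _ _ IH]; first by rewrite !raddf0.
rewrite !raddfD /= map_mpolyZ map_mpolyX !mevalZ !mevalX IH rmorphM rmorph_prod /=.
by congr (_ * _ + _); apply: eq_bigr => i _; rewrite rmorphXn.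
Qed.

Lemma msymXU k (s : 'S_k) i : msym s 'X_i = 'X_(s i) :> {mpoly R[k]}.
Proof. by rewrite /msym mmapX mmap1U. Qed.

Lemma msymC k (s : 'S_k) (a : R) : msym s a%:MP = a%:MP.
Proof. by rewrite /msym mmapC. Qed.

End MPoly.

Section PermSums.
Variable C : numClosedFieldType.

Definition perm_sums_poly n (c lam : 'I_n -> C) : {poly C} :=
  \prod_(s : 'S_n) ('X - (\sum_i c i * lam (s i))%:P).

Lemma monic_perm_sums_poly n (c lam : 'I_n -> C) : perm_sums_poly c lam \is monic.
Proof. exact: monic_prod_XsubC. Qed.

Lemma root_perm_sums_poly n (c lam : 'I_n -> C) (s : 'S_n) :
  root (perm_sums_poly c lam) (\sum_i c i * lam (s i)).
Proof. by rewrite /root horner_prod (bigD1 s) //= !hornerE subrr mul0r. Qed.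

Lemma c_value_perm_sums_poly n (c : 'I_n -> C) (A : 'M[C]_n) lam u :
  eigen_listing A lam -> root (perm_sums_poly c lam) u -> c_value c A u.
Proof.
move=> Alam; rewrite /root horner_prod => /prodf_eq0 [s _].
rewrite !hornerE subr_eq0 => /eqP ->; exists lam; split => //.
exists s; split; first by move=> i j _ _; apply: perm_inj.
rewrite [RHS]big_mkcond /=; apply: eq_bigr => i _.
by case: eqP => // ->; rewrite mul0r.
Qed.

Definition perm_sums_mpoly n (c : 'I_n -> C) : {mpoly {poly C}[n]} :=
  \prod_(s : 'S_n) (('X : {poly C})%:MP - \sum_i ((c i)%:P)%:MP * 'X_(s i)).

Lemma perm_sums_mpoly_sym n (c : 'I_n -> C) : perm_sums_mpoly c \is symmetric.
Proof.
apply/issymP => t; rewrite /perm_sums_mpoly rmorph_prod /=.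
rewrite [RHS](reindex_inj (h := fun s => (s * t)%g)) /=; last exact: mulIg.
apply: eq_bigr => s _; rewrite rmorphB /= msymC rmorph_sum /=; congr (_ - _).
by apply: eq_bigr => i _; rewrite rmorphM /= msymC msymXU permM.
Qed.

Definition perm_sums_esym n (c : 'I_n -> C) : {mpoly {poly C}[n]} :=
  sval (sym_fundamental (perm_sums_mpoly_sym c)).

Lemma perm_sums_esymE n (c : 'I_n -> C) :
  perm_sums_esym c \mPo [tuple mesym n {poly C} i.+1 | i < n] = perm_sums_mpoly c.
Proof. by rewrite /perm_sums_esym; case: sym_fundamental => t []. Qed.

Lemma perm_sums_esym_char_poly n (c : 'I_n -> C) (M : 'M[C]_n) lam :
  eigen_listing M lam ->
  (perm_sums_esym c).@[fun k => (char_poly_esym M k)%:P] = perm_sums_poly c lam.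
Proof.
move=> Mlam; set v : 'I_n -> {poly C} := fun i => (lam i)%:P.
have esymE k : (char_poly_esym M k)%:P = (tnth [tuple mesym n {poly C} i.+1 | i < n] k).@[v].
  rewrite tnth_mktuple; have kn : (k.+1 < n.+1)%N by rewrite ltnS.
  have := mroots_coeff [tuple v i | i < n] (Ordinal kn) => /=.
  have -> : \prod_(a <- [tuple v i | i < n]) ('X - a%:P) = map_poly polyC (char_poly M).
    rewrite Mlam rmorph_prod big_tuple /=; apply: eq_bigr => i _.
    by rewrite tnth_mktuple rmorphB /= map_polyX map_polyC.
  rewrite coef_map /= (@meval_eq _ _ (tnth [tuple v i | i < n]) v) => [coefE|i]; last first.
    by rewrite tnth_mktuple.
  rewrite /char_poly_esym polyCM coefE rmorphXn rmorphN1 mulrA -exprD addnn -mul2n.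
  by rewrite exprM sqrrN !expr1n mul1r.
rewrite (meval_eq _ esymE) -comp_mpoly_meval perm_sums_esymE /perm_sums_mpoly rmorph_prod /=.
apply: eq_bigr => s _; rewrite rmorphB /= mevalC !rmorph_sum /=; congr (_ - _).
by apply: eq_bigr => i _; rewrite rmorphM /= mevalC mevalXU polyCM.
Qed.

(* The coefficients of [char_poly (A + t A')] are polynomials in [t], and those
   of [perm_sums_poly c lam] are polynomials in the elementary symmetric
   functions of [lam]. *)
Lemma pencil_perm_sums_poly n (c : 'I_n -> C) (A A' : 'M[C]_n) :
  exists F : {poly {poly C}}, forall t lam, eigen_listing (A + t *: A') lam ->
    map_poly (horner_eval t) F = perm_sums_poly c lam.
Proof.
pose MX : 'M[{poly C}]_n := map_mx polyC A + 'X *: map_mx polyC A'.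
exists ((map_mpoly (map_poly polyC) (perm_sums_esym c)).@[fun k => (char_poly_esym MX k)%:P]).
move=> t lam Alam; rewrite meval_rmorph -(perm_sums_esym_char_poly c Alam).
have -> : map_mpoly (map_poly (horner_eval t)) (map_mpoly (map_poly polyC) (perm_sums_esym c))
    = perm_sums_esym c.
  apply/mpolyP => mo; rewrite !mcoeff_map_mpoly /=.
  by apply/polyP => j; rewrite !coef_map /= horner_evalE hornerC.
apply: meval_eq => k /=; rewrite map_polyC /= char_poly_esym_map; congr (char_poly_esym _ _)%:P.
by apply/matrixP => i j; rewrite !mxE /= horner_evalE hornerD hornerC hornerM hornerX hornerC.
Qed.

End PermSums.

Section CommonRoot.
Variable C : numClosedFieldType.

Lemma poly_eq0_of_inj_roots (p : {poly C}) (f : nat -> C) : injective f ->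
  (forall k, p.[f k] = 0) -> p = 0.
Proof.
move=> finj proot; apply/eqP; apply: contraT => p0.
have := max_poly_roots (rs := map f (iota 0 (size p))) p0.
rewrite size_map size_iota ltnn; apply; last by rewrite map_inj_uniq // iota_uniq.
by apply/allP => _ /mapP [k _ ->]; rewrite /root proot.
Qed.

Lemma monic_of_eval_monic (F : {poly {poly C}}) :
  (forall t, map_poly (horner_eval t) F \is monic) -> F \is monic.
Proof.
move=> Fmonic; set a := lead_coef F.
have : a * (a - 1) = 0.
  apply: (poly_eq0_of_inj_roots (mulrIn (oner_neq0 C))) => k.
  rewrite hornerM hornerD hornerN hornerC.
  have [->|a_k] := eqVneq a.[k%:R] 0; first by rewrite mul0r.
  have := Fmonic k%:R; rewrite monicE lead_coef_map_eq /= horner_evalE //.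
  by move/eqP ->; rewrite subrr mulr0.
move/eqP; rewrite mulf_eq0 subr_eq0 => /orP [/eqP a0|]; last by rewrite monicE.
have := Fmonic 0; move/eqP: a0; rewrite lead_coef_eq0 => /eqP ->.
by rewrite map_poly0 monicE lead_coef0 eq_sym oner_eq0.
Qed.

Lemma resultant_eq0_of_root (p q : {poly C}) u : p \is monic ->
  root p u -> root q u -> resultant p q = 0.
Proof.
move=> pmonic pu qu; apply/eqP; rewrite resultant_eq0.
have gcd_div : ('X - u%:P) %| gcdp p q by rewrite dvdp_gcd !dvdp_XsubCl pu qu.
have gcd0 : gcdp p q != 0 by rewrite gcdp_eq0 negb_and monic_neq0.
by have := dvdp_leq gcd0 gcd_div; rewrite size_XsubC.
Qed.

Definition cayley_nat (k : nat) : C := (k%:R + 'i) / (k%:R - 'i).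

Lemma natr_addCi_neq0 (k : nat) : k%:R + 'i != 0 :> C.
Proof.
apply: contraNneq (nonRealCi C) => /eqP; rewrite addrC addr_eq0 => /eqP ->.
by rewrite realN realn.
Qed.

Lemma conj_natr_addCi (k : nat) : (k%:R + 'i)^* = k%:R - 'i :> C.
Proof. by rewrite rmorphD /= conjCi (conj_Creal (realn _ k)). Qed.

Lemma cayley_nat_unit k : cayley_nat k * (cayley_nat k)^* = 1.
Proof.
have z0 := natr_addCi_neq0 k; have z'0 : (k%:R + 'i)^* != 0 :> C by rewrite conjC_eq0.
rewrite /cayley_nat -conj_natr_addCi rmorphM /= fmorphV /= conjCK.
by rewrite -mulrA mulKf // mulfV.
Qed.

Lemma cayley_nat_inj : injective cayley_nat.
Proof.
move=> k l; rewrite /cayley_nat -!conj_natr_addCi.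
have nz (j : nat) : (j%:R + 'i)^* != 0 :> C by rewrite conjC_eq0 natr_addCi_neq0.
move/eqP; rewrite eqr_div // !conj_natr_addCi => /eqP klE.
have : 2%:R * 'i * (l%:R - k%:R) = 0 :> C.
  by rewrite -[RHS](subrr ((k%:R + 'i) * (l%:R - 'i))) {2}klE; ring.
move/eqP; rewrite !mulf_eq0 pnatr_eq0 (negbTE (neq0Ci C)) subr_eq0 eqr_nat /=.
by move/eqP.
Qed.

(* The resultant of the two specialisations is a polynomial in [t] vanishing on
   the unit circle, hence identically. *)
Lemma common_root_at0 (F G : {poly {poly C}}) :
  (forall t, map_poly (horner_eval t) F \is monic) ->
  (forall t, map_poly (horner_eval t) G \is monic) ->
  (forall t : C, t * t^* = 1 -> exists u,
      root (map_poly (horner_eval t) F) u /\ root (map_poly (horner_eval t) G) u) ->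
  exists u, root (map_poly (horner_eval 0) F) u /\ root (map_poly (horner_eval 0) G) u.
Proof.
move=> Fmonic Gmonic common.
have Flead t : horner_eval t (lead_coef F) != 0.
  by rewrite (monicP (monic_of_eval_monic Fmonic)) rmorph1 oner_eq0.
have Glead t : horner_eval t (lead_coef G) != 0.
  by rewrite (monicP (monic_of_eval_monic Gmonic)) rmorph1 oner_eq0.
have res0 : resultant F G = 0.
  apply: (poly_eq0_of_inj_roots cayley_nat_inj) => k.
  rewrite -horner_evalE map_resultant ?Flead ?Glead //.
  have [u [Fu Gu]] := common _ (cayley_nat_unit k).
  exact: resultant_eq0_of_root (Fmonic _) Fu Gu.
have : resultant (map_poly (horner_eval 0) F) (map_poly (horner_eval 0) G) == 0.
  by rewrite -map_resultant ?Flead ?Glead // res0 rmorph0.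
rewrite resultant_eq0 => gcd_size.
have /closed_rootP [u gcd_u] : size (gcdp (map_poly (horner_eval 0) F)
    (map_poly (horner_eval 0) G)) != 1 by rewrite neq_ltn gcd_size orbT.
by exists u; split; apply: root_dvdp gcd_u; [apply: dvdp_gcdl | apply: dvdp_gcdr].
Qed.

End CommonRoot.

Theorem mainTheorem13 (C : numClosedFieldType) (n m : nat)
    (A : 'M[C]_n) (B : 'M[C]_m) (c : 'I_n -> C) (d : 'I_m -> C)
    (hc : forall i, c i \is Num.real) (hd : forall i, d i \is Num.real)
    (hW : forall z : C, c_numrange c A z <-> c_numrange d B z) :
  exists z : C, c_value c A z /\ c_value d B z.
Proof.
have [FA FAE] := pencil_perm_sums_poly c A (adjmx A).
have [FB FBE] := pencil_perm_sums_poly d B (adjmx B).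
have FA_monic t : map_poly (horner_eval t) FA \is monic.
  have [lam Alam] := exists_eigen_listing (A + t *: adjmx A).
  by rewrite (FAE t lam Alam) monic_perm_sums_poly.
have FB_monic t : map_poly (horner_eval t) FB \is monic.
  have [lam Blam] := exists_eigen_listing (B + t *: adjmx B).
  by rewrite (FBE t lam Blam) monic_perm_sums_poly.
have [t tt|u [FAu FBu]] := common_root_at0 FA_monic FB_monic.
  have [lamA [lamB [sA [sB [Alam Blam sumE]]]]] := unit_pencil_common_value hc hd hW tt.
  exists (\sum_i c i * lamA (sA i)); rewrite (FAE _ _ Alam) (FBE _ _ Blam) {2}sumE.
  by split; apply: root_perm_sums_poly.
have pencil0 k (M : 'M[C]_k) : M + 0 *: adjmx M = M by rewrite scale0r addr0.
have [lamA Alam] := exists_eigen_listing A; have [lamB Blam] := exists_eigen_listing B.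
exists u; split.
- by apply: (c_value_perm_sums_poly Alam); rewrite -(FAE 0) ?pencil0.
- by apply: (c_value_perm_sums_poly Blam); rewrite -(FBE 0) ?pencil0.
Qed.
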